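(* Let $\mathfrak{plc}_I$ be a tropical plactic algebra with generators $\{\mathfrak a_i:i\in I\}$, and let $L_m=[\ell_1,\dots,\ell_m]$, $m\ge1$, be a sequence of indices in $I$ with $\mathfrak a_{\ell_1}\le \mathfrak a_{\ell_2}\le\cdots\le\mathfrak a_{\ell_m}$. Then $$\mathfrak a_{\ell_1}\cdots\mathfrak a_{\ell_m}=\sum_{S}\ \prod_{s\in S}\mathfrak a_s,$$ where the sum runs over all nonempty subsequences $S$ of $L_m$ (taken by positions, with the order of $L_m$ preserved in the product).
   Context: A tropical plactic algebra (troplactic algebra) $\mathfrak{plc}_I$ ($I\subseteq\mathbb N$ nonempty) is an idempotent semiring $(\mathfrak{plc}_I,+,\cdot)$ (addition commutative, associative, with $\mathfrak u+\mathfrak u=\mathfrak u$ for all $\mathfrak u$; multiplication associative, possibly noncommutative, with identity $\mathfrak e$; a zero $\mathfrak o$ which is the additive identity and multiplicatively absorbing; multiplication distributes over addition on both sides), generated as a semiring by a totally ordered set of elements $\{\mathfrak a_i: i\in I\}$, such that for all generators $\mathfrak a\le\mathfrak b\le\mathfrak c$: (TPA1) $\mathfrak a=\mathfrak e+\mathfrak a$; (TPA2) $\mathfrak b\mathfrak a=\mathfrak a+\mathfrak b$ when $\mathfrak b>\mathfrak a$; (TPA3) $\mathfrak a(\mathfrak b+\mathfrak c)=\mathfrak a\mathfrak b+\mathfrak c$; (TPA4) $(\mathfrak a+\mathfrak b)\mathfrak c=\mathfrak a+\mathfrak b\mathfrak c$. *)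

From HB Require Import structures.
From mathcomp Require Import all_boot all_order all_algebra.
Set Implicit Arguments. Unset Strict Implicit. Unset Printing Implicit Defensive.
Import GRing.Theory.
Local Open Scope ring_scope.

Inductive generated (R : pzSemiRingType) (I : pred nat) (a : nat -> R) : R -> Prop :=
  | gen_zero : generated I a 0
  | gen_one : generated I a 1
  | gen_gen i : I i -> generated I a (a i)
  | gen_add x y : generated I a x -> generated I a y -> generated I a (x + y)
  | gen_mul x y : generated I a x -> generated I a y -> generated I a (x * y).

(* R (a semiring with 1 = e and 0 = o, possibly noncommutative) is a tropical
   plactic algebra with generators a i (i in I), the generators being totally
   ordered by their index: a i <= a j  iff  i <= j. *)
Record troplactic (R : pzSemiRingType) (I : pred nat) (a : nat -> R) : Prop := {
  tpa_nonempty : exists i, I i;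
  tpa_idem : forall x : R, x + x = x;
  tpa_gen : forall x : R, generated I a x;
  tpa1 : forall i, I i -> a i = 1 + a i;
  tpa2 : forall i j, I i -> I j -> (i < j)%N -> a j * a i = a i + a j;
  tpa3 : forall i j k, I i -> I j -> I k -> (i <= j)%N -> (j <= k)%N ->
          a i * (a j + a k) = a i * a j + a k;
  tpa4 : forall i j k, I i -> I j -> I k -> (i <= j)%N -> (j <= k)%N ->
          (a i + a j) * a k = a i + a j * a k }.

From HB Require Import structures.
From mathcomp Require Import all_boot all_order all_algebra.
Import GRing.Theory.
Local Open Scope ring_scope.

(* By TPA1 each factor can be replaced by e + a_l, and expanding the product
   gives the sum over all subsequences, the empty one contributing e.  That
   term is absorbed by idempotence, since the singleton a_l1 = e + a_l1 already
   occurs. *)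

Lemma mask_hasNF (T : Type) (m : bitseq) (s : seq T) :
  ~~ has id m -> mask m s = [::].
Proof.
elim: m s => [|b m IHm] [|x s] //=.
by case: b => //= /IHm ->.
Qed.

Lemma big_tuple_cons (V : nmodType) n (F : n.+1.-tuple bool -> V) :
  \sum_(t : n.+1.-tuple bool) F t =
  \sum_(b : bool) \sum_(t : n.-tuple bool) F (cons_tuple b t).
Proof.
rewrite pair_big /=.
rewrite (reindex (fun p : bool * n.-tuple bool => cons_tuple p.1 p.2)) //=.
exists (fun t : n.+1.-tuple bool => (thead t, behead_tuple t)).
  by move=> [b t] _ /=; congr pair; apply: val_inj.
by move=> [[|b s] //= Hs] _; apply: val_inj.
Qed.

Lemma big_prod_1Dr_mask (R : pzSemiRingType) (T : Type) (F : T -> R)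
    (s : seq T) :
  \prod_(x <- s) (1 + F x) =
  \sum_(bs : (size s).-tuple bool) \prod_(x <- mask bs s) F x.
Proof.
elim: s => [|x s IHs].
  rewrite big_nil (big_pred1 [tuple]) ?big_nil // => t.
  by rewrite (tuple0 t); apply/esym/eqP.
rewrite big_cons IHs big_tuple_cons big_bool /= mulrDl mul1r addrC mulr_sumr.
by congr (_ + _); apply: eq_bigr => t _; rewrite big_cons.
Qed.

Lemma addr_big_absorb (V : nmodType) (J : Type) (r : seq J) (P : pred J)
    (F : J -> V) (x : V) :
  (forall j, P j -> x + F j = x) -> x + \sum_(j <- r | P j) F j = x.
Proof.
move=> xF; apply: (big_rec (fun y => x + y = x)) => [|j y Pj xy].
  by rewrite addr0.
by rewrite addrA xF.
Qed.

Theorem mainTheorem2 (R : pzSemiRingType) (I : pred nat) (a : nat -> R)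
  (L : seq nat) :
  troplactic I a -> (0 < size L)%N -> all I L -> sorted leq L ->
  \prod_(s <- L) a s =
  \sum_(bs : (size L).-tuple bool | has id bs) \prod_(s <- mask bs L) a s.
Proof.
move=> TA L_gt0 /allP IL _.
have -> : \prod_(s <- L) a s = \prod_(s <- L) (1 + a s).
  by apply: eq_big_seq => s /IL Is; rewrite -(tpa1 TA).
rewrite big_prod_1Dr_mask (bigID (fun bs : (size L).-tuple bool => has id bs)).
set S := (X in X + _ = _).
have S_absorbs1 : S + 1 = S.
  case: L L_gt0 IL @S => [//|l L] _ IL S.
  rewrite /S (bigD1 (cons_tuple true (nseq_tuple (size L) false))) //=.
  rewrite mask_false big_seq1 -addrA [_ + 1]addrC addrA [a l + 1]addrC.
  by rewrite -(tpa1 TA) ?IL ?mem_head.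
apply: addr_big_absorb => bs /mask_hasNF ->.
by rewrite big_nil.
Qed.
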